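(* Let $\mathfrak G_{\mathbb N}$ be the infinite undirected graph with vertex set $\mathbb N$ and edges $\{a,a+1\}$ for all $a\in\mathbb N$. For all $a,b,c,d\in\mathbb N$, $$\mathfrak G_{\mathbb N}\models a:b::_P c:d\iff |a-b|=|c-d|.$$
   Context: For undirected graphs (edges are one- or two-element vertex sets, $uEv$ iff $\{u,v\}$ is an edge): path formulas $\pi_0(x,y):\equiv x=y$, $\pi_1(x,y):\equiv xEy$, $\pi_n(x,y):\equiv\exists z_1\ldots z_{n-1}(xEz_1\wedge\cdots\wedge z_{n-1}Ey)$ for $n\ge2$. Path type $\uparrow^P_{\mathfrak G}(a\to b)=\{\pi_n:\mathfrak G\models\pi_n(a,b)\}$; $\uparrow^P_{\mathfrak G}(a\to b:\cdot\, c\to d)=\uparrow^P_{\mathfrak G}(a\to b)\cap\uparrow^P_{\mathfrak G}(c\to d)$. A path formula is trivial iff it lies in $\uparrow^P_{\mathfrak G}(a\to b:\cdot\, c\to d)$ for all vertices $a,b,c,d$; $\emptyset_{\mathfrak G}$ is the set of these. $\mathfrak G\models a\to b:\cdot_P\, c\to d$ iff either $\uparrow^P_{\mathfrak G}(a\to b)\cup\uparrow^P_{\mathfrak G}(c\to d)$ consists only of trivial formulas, or $\uparrow^P_{\mathfrak G}(a\to b:\cdot\, c\to d)$ contains a non-trivial formula and for every vertex $d'$, $\emptyset_{\mathfrak G}\subsetneq\uparrow^P(a\to b:\cdot\, c\to d)\subseteq\uparrow^P(a\to b:\cdot\, c\to d')$ implies $\emptyset_{\mathfrak G}\subsetneq\uparrow^P(a\to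 b:\cdot\, c\to d')\subseteq\uparrow^P(a\to b:\cdot\, c\to d)$. $\mathfrak G\models a:b::_P c:d$ iff $\mathfrak G\models a\to b:\cdot_P\, c\to d$, $b\to a:\cdot_P\, d\to c$, $c\to d:\cdot_P\, a\to b$ and $d\to c:\cdot_P\, b\to a$. *)

From Stdlib Require Import Arith ZArith.

Fixpoint chain {V : Type} (E : V -> V -> Prop) (k : nat) (x y : V) : Prop :=
  match k with
  | 0 => E x y
  | S k' => exists z, E x z /\ chain E k' z y
  end.

Definition path_formula {V : Type} (E : V -> V -> Prop) (n : nat) (x y : V) : Prop :=
  match n with
  | 0 => x = y
  | S k => chain E k x y
  end.

(* Sets of path formulas are represented as predicates on their index n. *)
Definition ptype {V : Type} (E : V -> V -> Prop) (a b : V) : nat -> Prop :=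
  fun n => path_formula E n a b.

Definition ptype2 {V : Type} (E : V -> V -> Prop) (a b c d : V) : nat -> Prop :=
  fun n => ptype E a b n /\ ptype E c d n.

Definition trivial_pf {V : Type} (E : V -> V -> Prop) : nat -> Prop :=
  fun n => forall a b c d : V, ptype2 E a b c d n.

Definition psubset (X Y : nat -> Prop) : Prop := forall n, X n -> Y n.
Definition pstrict (X Y : nat -> Prop) : Prop := psubset X Y /\ exists n, Y n /\ ~ X n.

Definition arrow_P {V : Type} (E : V -> V -> Prop) (a b c d : V) : Prop :=
  (forall n, ptype E a b n \/ ptype E c d n -> trivial_pf E n)
  \/
  ((exists n, ptype2 E a b c d n /\ ~ trivial_pf E n) /\
   forall d' : V,
     (pstrict (trivial_pf E) (ptype2 E a b c d) /\
      psubset (ptype2 E a b c d) (ptype2 E a b c d')) ->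
     (pstrict (trivial_pf E) (ptype2 E a b c d') /\
      psubset (ptype2 E a b c d') (ptype2 E a b c d))).

Definition analogy_P {V : Type} (E : V -> V -> Prop) (a b c d : V) : Prop :=
  arrow_P E a b c d /\ arrow_P E b a d c /\ arrow_P E c d a b /\ arrow_P E d c b a.

Definition GN_edge (u v : nat) : Prop := v = S u \/ u = S v.

(* In the path graph, pi_n(a, b) holds exactly when n >= |a - b| and n - |a - b|
   is even, so no path formula is trivial and the path type of (a, b) depends
   only on |a - b|.  If |c - d| > |a - b|, the vertex d' := c + |a - b| satisfies
   |c - d'| = |a - b|; the type of (a, b : c, d') then contains that of
   (a, b : c, d) together with the index |a - b|, which the latter misses, so
   a -> b :._P c -> d fails.  Hence that relation forces |c - d| <= |a - b|,
   and the analogy, which also asserts c -> d :._P a -> b, forces equality.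
   Conversely, equal distances give equal path types, and then the maximality
   condition is immediate. *)

From Stdlib Require Import Arith ZArith Lia.

Definition dist (a b : nat) : nat := (a - b) + (b - a).

Lemma dist_sym (a b : nat) : dist a b = dist b a.
Proof. unfold dist; lia. Qed.

Lemma Zabs_sub_of_nat (a b : nat) :
  Z.abs (Z.of_nat a - Z.of_nat b) = Z.of_nat (dist a b).
Proof. unfold dist; lia. Qed.

Lemma chain_GN_iff (k x y : nat) :
  chain GN_edge k x y <-> exists j, S k = dist x y + 2 * j.
Proof.
  revert x y; induction k as [|k IH]; intros x y; simpl; unfold GN_edge, dist.
  - split; [intros [H|H]; exists 0; lia | intros [j Hj]; lia].
  - split.
    + intros [z [Hxz Hzy]]. apply IH in Hzy as [j Hj]. unfold dist in Hj.
      (* the first step either approaches y or moves away from it *)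
      destruct (Nat.le_gt_cases (dist x y) (dist z y)); unfold dist in *.
      * exists (S j); lia.
      * exists j; lia.
    + intros [j Hj].
      destruct (lt_eq_lt_dec x y) as [[Hlt|Heq]|Hgt].
      * exists (S x); split; [lia|]. apply IH; exists j; unfold dist; lia.
      * exists (S x); split; [lia|]. apply IH; exists (j - 1); unfold dist; lia.
      * exists (x - 1); split; [lia|]. apply IH; exists j; unfold dist; lia.
Qed.

Lemma ptype_GN_iff (a b n : nat) :
  ptype GN_edge a b n <-> exists j, n = dist a b + 2 * j.
Proof.
  destruct n as [|n]; unfold ptype, path_formula.
  - unfold dist; split; [intros ->; exists 0; lia | intros [j Hj]; lia].
  - apply chain_GN_iff.
Qed.

Lemma ptype_GN_dist (a b : nat) : ptype GN_edge a b (dist a b).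
Proof. apply ptype_GN_iff; exists 0; lia. Qed.

Lemma ptype_GN_dist_le (a b n : nat) : ptype GN_edge a b n -> dist a b <= n.
Proof. intros H; apply ptype_GN_iff in H as [j ->]; lia. Qed.

Lemma ptype_GN_of_dist_eq (a b c d n : nat) :
  dist a b = dist c d -> ptype GN_edge a b n -> ptype GN_edge c d n.
Proof. intros Hd H; apply ptype_GN_iff; rewrite <- Hd; apply ptype_GN_iff, H. Qed.

Lemma GN_not_trivial (n : nat) : ~ trivial_pf GN_edge n.
Proof.
  intros H; destruct (H 0 (S n) 0 0) as [Hn _].
  apply ptype_GN_dist_le in Hn; unfold dist in Hn; lia.
Qed.

Lemma pstrict_GN_trivial (a b c d : nat) :
  (exists n, ptype2 GN_edge a b c d n) -> pstrict (trivial_pf GN_edge) (ptype2 GN_edge a b c d).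
Proof.
  intros [n Hn]; split.
  - intros m Hm; exfalso; exact (GN_not_trivial m Hm).
  - exists n; split; [exact Hn | apply GN_not_trivial].
Qed.

Lemma arrow_P_GN_dist_le (a b c d : nat) :
  arrow_P GN_edge a b c d -> dist c d <= dist a b.
Proof.
  intros [Htriv|[[n [Hn _]] Hmax]].
  - exfalso; apply (GN_not_trivial (dist a b)), Htriv; left; apply ptype_GN_dist.
  - destruct (Nat.le_gt_cases (dist c d) (dist a b)) as [|Hgt]; [assumption|exfalso].
    set (d' := c + dist a b).
    assert (Hd' : dist a b = dist c d') by (unfold d', dist; lia).
    destruct (Hmax d') as [_ Hback].
    + split; [apply pstrict_GN_trivial; exists n; exact Hn|].
      intros m [Habm Hcdm]; split; [exact Habm|].
      exact (ptype_GN_of_dist_eq a b c d' m Hd' Habm).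
    + assert (Hcd : ptype GN_edge c d (dist a b)).
      { apply Hback; split; [apply ptype_GN_dist|].
        rewrite Hd'; apply ptype_GN_dist. }
      apply ptype_GN_dist_le in Hcd; lia.
Qed.

Lemma arrow_P_GN_of_dist_eq (a b c d : nat) :
  dist a b = dist c d -> arrow_P GN_edge a b c d.
Proof.
  intros Hd.
  assert (Habcd : ptype2 GN_edge a b c d (dist a b)).
  { split; [|rewrite Hd]; apply ptype_GN_dist. }
  right; split.
  - exists (dist a b); split; [exact Habcd | apply GN_not_trivial].
  - intros d' [_ Hsub]; split.
    + apply pstrict_GN_trivial; exists (dist a b); apply Hsub, Habcd.
    + intros m [Habm _]; split; [exact Habm|].
      exact (ptype_GN_of_dist_eq a b c d m Hd Habm).
Qed.

Theorem theorem18 : forall a b c d : nat,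
  analogy_P GN_edge a b c d <->
  Z.abs (Z.of_nat a - Z.of_nat b) = Z.abs (Z.of_nat c - Z.of_nat d).
Proof.
  intros a b c d; rewrite !Zabs_sub_of_nat; split.
  - intros [Habcd [_ [Hcdab _]]].
    apply arrow_P_GN_dist_le in Habcd; apply arrow_P_GN_dist_le in Hcdab; lia.
  - intros H; assert (Hd : dist a b = dist c d) by lia.
    repeat split; apply arrow_P_GN_of_dist_eq;
      rewrite ?(dist_sym b a), ?(dist_sym d c); congruence.
Qed.
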